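(* Let $n\ge1$. The canonical frame $\mathfrak{P}^c=(P^c,\subseteq)$ of $\mathbf{ML}_n$ satisfies (uni): for any $\Gamma,\Delta,\Sigma\in P^c$ with $\Gamma\subseteq\Delta$ and $\Gamma\subseteq\Sigma$, there is $\Theta\in P^c$ with $\Gamma\subseteq\Theta$ and $end(\Theta)=end(\Delta)\cup end(\Sigma)$.
   Context: Formulas are built from a countably infinite set of propositional variables and $\bot$ using $\land,\lor,\to$; $\neg\alpha:=\alpha\to\bot$. $\mathbf{ML}_n$ is the smallest superintuitionistic logic (containing intuitionistic propositional logic, closed under modus ponens and uniform substitution) that contains all instances of $\boldsymbol{kp}$: $(\neg p\to q\lor r)\to(\neg p\to q)\lor(\neg p\to r)$ and $\boldsymbol{bd}_n$: $p_n\lor(p_n\to(p_{n-1}\lor(p_{n-1}\to(\cdots(p_1\lor(p_1\to\bot))\cdots))))$, and is closed under the rule $\boldsymbol{Ed}_n$: from $\alpha\to(\beta\lor\bigvee_{i=1}^n\neg\lambda_i)$ infer $\alpha\to\beta$, where $p_1,\dots,p_n$ are distinct variables not occurring in $\alpha$ or $\beta$ and $\lambda_i=p_i\land\bigwedge_{j\neq i}\neg p_j$. $\Gamma\vdash_n\varphi$ means there are finitely many $\gamma_1,\dots,\gamma_k\in\Gamma$ with $\bigwedge_i\gamma_i\to\varphi\in\mathbf{ML}_n$. A set $\Gamma$ of formulas is closed if $\Gamma\vdash_n\varphi$ implies $\varphi\in\Gamma$; consistent if $\Gamma\nvdash_n\bot$; prime if $\varphi\lor\psi\in\Gamma$ implies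 $\varphi\in\Gamma$ or $\psi\in\Gamma$. $P^c$ is the set of consistent, closed, prime sets, ordered by inclusion. In a poset, $End$ is the set of maximal elements and $end(w)$ the set of maximal elements above $w$. *)

From Stdlib Require Import List Arith.
Import ListNotations.

Inductive form : Type :=
| Var : nat -> form
| Bot : form
| And : form -> form -> form
| Or  : form -> form -> form
| Imp : form -> form -> form.

Definition Neg (a : form) : form := Imp a Bot.
Definition Top : form := Imp Bot Bot.

Fixpoint subst (s : nat -> form) (a : form) : form :=
  match a with
  | Var p => s p
  | Bot => Bot
  | And b c => And (subst s b) (subst s c)
  | Or b c => Or (subst s b) (subst s c)
  | Imp b c => Imp (subst s b) (subst s c)
  end.

Fixpoint occurs (v : nat) (a : form) : Prop :=
  match a with
  | Var p => p = v
  | Bot => False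
  | And b c | Or b c | Imp b c => occurs v b \/ occurs v c
  end.

Fixpoint bdf (k : nat) (f : nat -> form) : form :=
  match k with
  | 0 => Bot
  | S k' => Or (f (S k')) (Imp (f (S k')) (bdf k' f))
  end.

(* lambda_i = p_i /\ /\_{j <> i, 1<=j<=n} ~p_j  (for n = 1 it is just p_1) *)
Definition lam (n : nat) (ps : nat -> nat) (i : nat) : form :=
  fold_left (fun acc j => And acc (Neg (Var (ps j))))
            (filter (fun j => negb (Nat.eqb j i)) (seq 1 n))
            (Var (ps i)).

Definition ed_disj (n : nat) (ps : nat -> nat) (b : form) : form :=
  fold_left (fun acc i => Or acc (Neg (lam n ps i))) (seq 1 n) b.

Inductive ML (n : nat) : form -> Prop :=
| ax_K  : forall a b, ML n (Imp a (Imp b a))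
| ax_S  : forall a b c, ML n (Imp (Imp a (Imp b c)) (Imp (Imp a b) (Imp a c)))
| ax_A1 : forall a b, ML n (Imp (And a b) a)
| ax_A2 : forall a b, ML n (Imp (And a b) b)
| ax_A3 : forall a b, ML n (Imp a (Imp b (And a b)))
| ax_O1 : forall a b, ML n (Imp a (Or a b))
| ax_O2 : forall a b, ML n (Imp b (Or a b))
| ax_O3 : forall a b c, ML n (Imp (Imp a c) (Imp (Imp b c) (Imp (Or a b) c)))
| ax_EFQ : forall a, ML n (Imp Bot a)
| ax_kp : forall p q r,
    ML n (Imp (Imp (Neg p) (Or q r)) (Or (Imp (Neg p) q) (Imp (Neg p) r)))
| ax_bd : forall f : nat -> form, ML n (bdf n f)
| r_MP : forall a b, ML n (Imp a b) -> ML n a -> ML n b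
| r_US : forall (s : nat -> form) a, ML n a -> ML n (subst s a)
| r_Ed : forall (a b : form) (ps : nat -> nat),
    (forall i j, 1 <= i <= n -> 1 <= j <= n -> ps i = ps j -> i = j) ->
    (forall i, 1 <= i <= n -> ~ occurs (ps i) a /\ ~ occurs (ps i) b) ->
    ML n (Imp a (ed_disj n ps b)) -> ML n (Imp a b).

Definition fset := form -> Prop.

Definition conj_list (l : list form) : form := fold_right And Top l.

Definition derives (n : nat) (G : fset) (phi : form) : Prop :=
  exists l : list form, (forall g, In g l -> G g) /\ ML n (Imp (conj_list l) phi).

Definition closed (n : nat) (G : fset) : Prop := forall phi, derives n G phi -> G phi.
Definition consistent (n : nat) (G : fset) : Prop := ~ derives n G Bot.
Definition prime (G : fset) : Prop := forall a b, G (Or a b) -> G a \/ G b.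

Definition Pc (n : nat) (G : fset) : Prop := consistent n G /\ closed n G /\ prime G.

Definition incl (G D : fset) : Prop := forall phi, G phi -> D phi.

Definition End_ (n : nat) (G : fset) : Prop :=
  Pc n G /\ forall D, Pc n D -> incl G D -> incl D G.

Definition end_ (n : nat) (G D : fset) : Prop := End_ n D /\ incl G D.

(* Let E be the set of maximal points above Delta or above Sigma. Extend
   Gamma by all ~~(d \/ s) with d in Delta and s in Sigma, and take a prime
   closed theory Theta containing this set that omits every formula missed by
   some member of E. This is possible by kp: a derivation of a disjunction of
   such formulas yields Gamma |- ~p -> f for a single disjunct f, and every
   member of E contains Gamma and ~p. Then Theta lies below every point of E;
   conversely a maximal point above Theta containing neither Delta nor Sigma
   would contain ~d and ~s for some d in Delta and s in Sigma, contradicting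
   ~~(d \/ s). Maximal points above any point exist by bd_n. *)
From Pilot Require Import Defs.
From Stdlib Require Import List Arith Lia Classical Cantor.
Import ListNotations.
(* [incl] must be the inclusion of [Defs], not [List.incl]. *)
Import Defs.

Inductive Der (n : nat) (A : fset) : form -> Prop :=
| Der_hyp : forall a, A a -> Der n A a
| Der_thm : forall a, ML n a -> Der n A a
| Der_mp : forall a b, Der n A (Imp a b) -> Der n A a -> Der n A b.

Definition add (A : fset) (a : form) : fset := fun x => A x \/ x = a.

Ltac hyp := apply Der_hyp; unfold add; tauto.

Lemma Der_mono n (A B : fset) phi : incl A B -> Der n A phi -> Der n B phi.
Proof.
  intros H D; induction D.
  - apply Der_hyp; auto.
  - apply Der_thm; auto.
  - eapply Der_mp; eauto.
Qed.

Lemma Der_imp_refl n A a : Der n A (Imp a a).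
Proof.
  apply Der_thm. eapply r_MP; [eapply r_MP; [apply (ax_S n a (Imp a a) a) | apply ax_K] | apply ax_K].
Qed.

Lemma Der_weaken n A a b : Der n A a -> Der n A (Imp b a).
Proof. intro H. eapply Der_mp; [apply Der_thm, ax_K | exact H]. Qed.

Lemma Der_deduction n A a b : Der n (add A a) b -> Der n A (Imp a b).
Proof.
  intro D; induction D as [x Hx|x Hx|x y _ IH1 _ IH2].
  - destruct Hx as [Hx| ->]; [apply Der_weaken, Der_hyp, Hx | apply Der_imp_refl].
  - apply Der_weaken, Der_thm, Hx.
  - eapply Der_mp; [eapply Der_mp; [apply Der_thm, ax_S | exact IH1] | exact IH2].
Qed.

Lemma Der_cut n A a b : Der n A a -> Der n (add A a) b -> Der n A b.
Proof. intros H1 H2. eapply Der_mp; [apply Der_deduction, H2 | exact H1]. Qed.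

Lemma ML_of_Der_empty n phi : Der n (fun _ => False) phi -> ML n phi.
Proof. intro D; induction D; [contradiction | auto | eapply r_MP; eauto]. Qed.

Lemma Der_andI n A a b : Der n A a -> Der n A b -> Der n A (And a b).
Proof. intros. eapply Der_mp; [eapply Der_mp; [apply Der_thm, ax_A3|]|]; eauto. Qed.

Lemma Der_andE1 n A a b : Der n A (And a b) -> Der n A a.
Proof. intros. eapply Der_mp; [apply Der_thm, ax_A1|]; eauto. Qed.

Lemma Der_andE2 n A a b : Der n A (And a b) -> Der n A b.
Proof. intros. eapply Der_mp; [apply Der_thm, ax_A2|]; eauto. Qed.

Lemma Der_orI1 n A a b : Der n A a -> Der n A (Or a b).
Proof. intros. eapply Der_mp; [apply Der_thm, ax_O1|]; eauto. Qed.

Lemma Der_orI2 n A a b : Der n A b -> Der n A (Or a b).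
Proof. intros. eapply Der_mp; [apply Der_thm, ax_O2|]; eauto. Qed.

Lemma Der_orE n A a b c :
  Der n A (Or a b) -> Der n (add A a) c -> Der n (add A b) c -> Der n A c.
Proof.
  intros H H1 H2. eapply Der_mp; [|exact H].
  eapply Der_mp; [eapply Der_mp; [apply Der_thm, ax_O3 | apply Der_deduction, H1] |].
  apply Der_deduction, H2.
Qed.

Lemma Der_efq n A a : Der n A Bot -> Der n A a.
Proof. intros. eapply Der_mp; [apply Der_thm, ax_EFQ|]; eauto. Qed.

Lemma Der_conj_list n A l : (forall x, In x l -> Der n A x) -> Der n A (conj_list l).
Proof.
  induction l as [|x l IH]; intro H; simpl.
  - apply Der_imp_refl.
  - apply Der_andI; [apply H | apply IH; intros; apply H]; simpl; auto.
Qed.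

Lemma Der_conj_list_in n A l x : Der n A (conj_list l) -> In x l -> Der n A x.
Proof.
  induction l as [|y l IH]; simpl; intros H Hi; [contradiction|].
  destruct Hi as [->|Hi]; [eapply Der_andE1; eauto | apply IH; [eapply Der_andE2; eauto | auto]].
Qed.

Lemma derives_Der n A phi : derives n A phi <-> Der n A phi.
Proof.
  split.
  - intros [l [Hl HM]]. eapply Der_mp; [apply Der_thm, HM|].
    apply Der_conj_list; intros; apply Der_hyp; auto.
  - intro D; induction D as [x Hx|x Hx|x y _ [l1 [H1 M1]] _ [l2 [H2 M2]]].
    + exists [x]. split; [simpl; intros g [->|[]]; auto | apply ax_A1].
    + exists []. split; [simpl; tauto | eapply r_MP; [apply ax_K | auto]].
    + exists (l1 ++ l2). split.
      { intros g Hg; apply in_app_or in Hg; destruct Hg; auto. }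
      apply ML_of_Der_empty, Der_deduction.
      assert (C : forall l, incl (fun z => In z l) (fun z => In z (l1 ++ l2)) ->
                  Der n (add (fun _ => False) (conj_list (l1 ++ l2))) (conj_list l)).
      { intros l Hl. apply Der_conj_list; intros z Hz.
        eapply Der_conj_list_in; [hyp | apply Hl, Hz]. }
      eapply Der_mp; [eapply Der_mp; [apply Der_thm, M1 | apply C] |].
      * intros z Hz; apply in_or_app; auto.
      * eapply Der_mp; [apply Der_thm, M2 | apply C]. intros z Hz; apply in_or_app; auto.
Qed.

Lemma Pc_intro n G :
  ~ Der n G Bot -> (forall phi, Der n G phi -> G phi) -> prime G -> Pc n G.
Proof.
  intros Hc Hd Hp. repeat split; auto.
  - intro H; apply Hc, derives_Der, H.
  - intros phi H; apply Hd, derives_Der, H.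
Qed.

Lemma Pc_Der n G phi : Pc n G -> Der n G phi -> G phi.
Proof. intros [_ [H _]] D; apply H, derives_Der, D. Qed.

Lemma Pc_Bot n G : Pc n G -> ~ G Bot.
Proof. intros [H _] HB; apply H, derives_Der, Der_hyp, HB. Qed.

Lemma Pc_prime n G : Pc n G -> prime G.
Proof. intros [_ [_ H]]; exact H. Qed.

Lemma Pc_mp n G a b : Pc n G -> G (Imp a b) -> G a -> G b.
Proof. intros H H1 H2. apply (Pc_Der n); auto. eapply Der_mp; apply Der_hyp; eauto. Qed.

(** * Enumeration of formulas *)

Fixpoint form_code (a : form) : nat :=
  match a with
  | Var p => to_nat (0, p)
  | Bot => to_nat (1, 0)
  | And b c => to_nat (2, to_nat (form_code b, form_code c))
  | Or b c => to_nat (3, to_nat (form_code b, form_code c))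
  | Imp b c => to_nat (4, to_nat (form_code b, form_code c))
  end.

(* The fuel [f] makes decoding structurally recursive; it suffices once it
   bounds the depth of the encoded formula. *)
Fixpoint form_decode (f k : nat) : form :=
  match f with
  | 0 => Bot
  | S f =>
    match of_nat k with
    | (0, p) => Var p
    | (2, m) => let (x, y) := of_nat m in And (form_decode f x) (form_decode f y)
    | (3, m) => let (x, y) := of_nat m in Or (form_decode f x) (form_decode f y)
    | (4, m) => let (x, y) := of_nat m in Imp (form_decode f x) (form_decode f y)
    | _ => Bot
    end
  end.

Fixpoint form_depth (a : form) : nat :=
  match a with
  | Var _ | Bot => 1
  | And b c | Or b c | Imp b c => S (Nat.max (form_depth b) (form_depth c))
  end.

Lemma form_decode_code a f : form_depth a <= f -> form_decode f (form_code a) = a.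
Proof.
  revert f; induction a; intros f Hf; destruct f as [|f]; cbn [form_depth] in Hf; try lia;
    cbn [form_decode form_code]; rewrite cancel_of_to; auto;
    rewrite cancel_of_to, IHa1, IHa2 by lia; reflexivity.
Qed.

Definition form_enum (k : nat) : form := let (f, c) := of_nat k in form_decode f c.

Lemma form_enum_surj a : exists k, form_enum k = a.
Proof.
  exists (to_nat (form_depth a, form_code a)). unfold form_enum.
  rewrite cancel_of_to. apply form_decode_code; auto.
Qed.

(** * Prime extensions avoiding a set of formulas *)

Definition disj (l : list form) : form := fold_right Or Bot l.

Definition avoids n (A F : fset) : Prop :=
  forall l, (forall x, In x l -> F x) -> ~ Der n A (disj l).

Lemma Der_disj_app_l n A l1 l2 : Der n A (disj l1) -> Der n A (disj (l1 ++ l2)).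
Proof.
  revert A; induction l1 as [|x l1 IH]; simpl; intros A H.
  - apply Der_efq, H.
  - eapply Der_orE; [exact H | apply Der_orI1; hyp |]. apply Der_orI2, IH; hyp.
Qed.

Lemma Der_disj_app_r n A l1 l2 : Der n A (disj l2) -> Der n A (disj (l1 ++ l2)).
Proof. induction l1; simpl; intros; [auto | apply Der_orI2; auto]. Qed.

Lemma avoids_antimono n A B F : incl A B -> avoids n B F -> avoids n A F.
Proof. intros H HB l Hl D; apply (HB l Hl); eapply Der_mono; eauto. Qed.

Lemma avoids_not_mem n Z F f : avoids n Z F -> Z f -> ~ F f.
Proof.
  intros H Zf Ff. apply (H [f]); simpl.
  - intros x [->|[]]; auto.
  - apply Der_orI1, Der_hyp, Zf.
Qed.

Lemma not_avoids n B F :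
  ~ avoids n B F -> exists l, (forall x, In x l -> F x) /\ Der n B (disj l).
Proof. intro H. apply NNPP; intro H'. apply H; intros l Hl D. apply H'; eauto. Qed.

Section Lindenbaum.
Variables (n : nat) (A F : fset).

Fixpoint lind_chain (k : nat) : fset :=
  match k with
  | 0 => A
  | S k => fun x => lind_chain k x \/
                    (x = form_enum k /\ avoids n (add (lind_chain k) (form_enum k)) F)
  end.

Definition lind_union : fset := fun x => exists k, lind_chain k x.

Lemma lind_chain_mono k k' : k <= k' -> incl (lind_chain k) (lind_chain k').
Proof. induction 1; simpl; intros x Hx; auto. Qed.

Lemma lind_union_compact phi : Der n lind_union phi -> exists k, Der n (lind_chain k) phi.
Proof.
  intro D; induction D as [x [k Hx]|x Hx|x y _ [k1 IH1] _ [k2 IH2]].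
  - exists k; apply Der_hyp; auto.
  - exists 0; apply Der_thm; auto.
  - exists (Nat.max k1 k2).
    eapply Der_mp; eapply Der_mono; try eassumption; apply lind_chain_mono; lia.
Qed.

Lemma lind_union_not_mem a :
  ~ lind_union a -> exists l, (forall x, In x l -> F x) /\ Der n (add lind_union a) (disj l).
Proof.
  intro H. destruct (form_enum_surj a) as [k <-].
  destruct (classic (avoids n (add (lind_chain k) (form_enum k)) F)) as [Hc|Hc].
  - exfalso; apply H; exists (S k); simpl; right; auto.
  - destruct (not_avoids _ _ _ Hc) as [l [Hl D]]. exists l; split; auto.
    eapply Der_mono; [|exact D]. intros x [Hx| ->]; [left; exists k; auto | right; auto].
Qed.

Hypothesis A_avoids : avoids n A F.

Lemma lind_chain_avoids k : avoids n (lind_chain k) F.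
Proof.
  induction k as [|k IH]; simpl; auto.
  destruct (classic (avoids n (add (lind_chain k) (form_enum k)) F)) as [Hc|Hc].
  - eapply avoids_antimono; [|exact Hc]. intros x [Hx|[Hx _]]; [left|right]; auto.
  - eapply avoids_antimono; [|exact IH]. intros x [Hx|[_ Hx]]; [auto | contradiction].
Qed.

Lemma lind_union_avoids : avoids n lind_union F.
Proof.
  intros l Hl D. destruct (lind_union_compact _ D) as [k Dk].
  exact (lind_chain_avoids k l Hl Dk).
Qed.

Lemma lindenbaum :
  exists Z, incl A Z /\ (forall phi, Der n Z phi -> Z phi) /\ prime Z /\ avoids n Z F.
Proof.
  exists lind_union. split; [intros x Hx; exists 0; auto|].
  split; [|split; [|exact lind_union_avoids]].
  - intros phi D. apply NNPP; intro Hn.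
    destruct (lind_union_not_mem _ Hn) as [l [Hl Dl]].
    apply (lind_union_avoids l Hl). eapply Der_cut; eauto.
  - intros a b Hab. apply NNPP; intro Hn.
    destruct (lind_union_not_mem a) as [l1 [H1 D1]]; [tauto|].
    destruct (lind_union_not_mem b) as [l2 [H2 D2]]; [tauto|].
    apply (lind_union_avoids (l1 ++ l2)).
    + intros x Hx; apply in_app_or in Hx; destruct Hx; auto.
    + eapply Der_orE; [apply Der_hyp, Hab | apply Der_disj_app_l, D1 | apply Der_disj_app_r, D2].
Qed.

End Lindenbaum.

Lemma Der_disj_Bot n A l : (forall x, In x l -> x = Bot) -> Der n A (disj l) -> Der n A Bot.
Proof.
  revert A; induction l as [|x l IH]; simpl; intros A Hl D; auto.
  eapply Der_orE; [exact D | |].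
  - rewrite (Hl x) by auto. hyp.
  - apply IH; [auto | hyp].
Qed.

Lemma Pc_extension n A : ~ Der n A Bot -> exists Z, incl A Z /\ Pc n Z.
Proof.
  intro H. destruct (lindenbaum n A (fun x => x = Bot)) as [Z [HAZ [HZ [PrZ AZ]]]].
  - intros l Hl D. exact (H (Der_disj_Bot n A l Hl D)).
  - exists Z; split; auto. apply Pc_intro; auto.
    intro D. exact (avoids_not_mem n Z _ Bot AZ (HZ _ D) eq_refl).
Qed.

(** * Maximal points *)

Lemma End_neg_or n Y phi : End_ n Y -> Y phi \/ Y (Neg phi).
Proof.
  intros [HY Hmax]. destruct (classic (Y (Neg phi))) as [h|h]; auto. left.
  destruct (Pc_extension n (add Y phi)) as [Z [HZ PZ]].
  - intro D. apply h, (Pc_Der n); auto. apply Der_deduction, D.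
  - apply (Hmax Z PZ); [intros x Hx; apply HZ; left; auto | apply HZ; right; auto].
Qed.

Lemma bdf_ext k f g : (forall i, i <= k -> f i = g i) -> bdf k f = bdf k g.
Proof.
  induction k as [|k IH]; simpl; intro H; auto.
  rewrite H, IH by (auto; intros; apply H; lia). reflexivity.
Qed.

Lemma Pc_not_End n D :
  Pc n D -> ~ End_ n D -> exists D' a, Pc n D' /\ incl D D' /\ D' a /\ ~ D a.
Proof.
  intros PD HE. apply NNPP; intro C. apply HE; split; auto.
  intros D' P' I' x Hx. apply NNPP; intro Hx'. apply C; exists D', x; auto.
Qed.

(* Each proper extension step refutes the outer atom of some bd_k, so a chain
   of proper extensions has length at most k. *)
Lemma end_exists_of_bdf n k :
  forall D, Pc n D -> (forall f, D (bdf k f)) -> exists X, end_ n D X.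
Proof.
  induction k as [|k IH]; intros D PD HD.
  - exfalso. exact (Pc_Bot n D PD (HD (fun _ => Bot))).
  - destruct (classic (End_ n D)) as [HE|HE]; [exists D; split; [auto | intros x; auto]|].
    destruct (Pc_not_End n D PD HE) as [D' [a [P' [I' [Ha Hna]]]]].
    destruct (IH D' P') as [X [EX IX]].
    + intro g. set (f := fun i => if Nat.eqb i (S k) then a else g i).
      assert (Hf : D (bdf (S k) f)) by apply HD.
      simpl in Hf. unfold f at 1 2 in Hf. rewrite Nat.eqb_refl in Hf.
      rewrite (bdf_ext k f g) in Hf.
      2:{ intros i Hi; unfold f; destruct (Nat.eqb_spec i (S k)); [lia | auto]. }
      destruct (Pc_prime n D PD _ _ Hf) as [h|h]; [contradiction|].
      apply I' in h. eapply Pc_mp; eauto.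
    + exists X; split; [exact EX | intros x Hx; apply IX, I', Hx].
Qed.

Lemma end_exists n D : Pc n D -> exists X, end_ n D X.
Proof.
  intro PD. apply (end_exists_of_bdf n n D PD). intro f.
  apply (Pc_Der n); auto. apply Der_thm, ax_bd.
Qed.

Definition NN (x : form) : form := Neg (Neg x).

Lemma Der_NN_mono n B x y : Der n B (Imp x y) -> Der n B (Imp (NN x) (NN y)).
Proof.
  intro H. unfold NN, Neg. apply Der_deduction, Der_deduction.
  apply (Der_mp _ _ (Imp x Bot)); [hyp|]. apply Der_deduction.
  apply (Der_mp _ _ y); [hyp|]. apply (Der_mp _ _ x); [|hyp].
  eapply Der_mono; [|exact H]. intros z Hz; unfold add; tauto.
Qed.

Lemma Der_NN_intro n B x : Der n B x -> Der n B (NN x).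
Proof.
  intro H. unfold NN, Neg. apply Der_deduction. apply (Der_mp _ _ x); [hyp|].
  eapply Der_mono; [|exact H]. intros z Hz; unfold add; tauto.
Qed.

Lemma Der_or_and_l n B d1 d2 s1 s2 : Der n B (Imp (Or (And d1 d2) (And s1 s2)) (Or d1 s1)).
Proof.
  apply Der_deduction. eapply Der_orE; [hyp| |].
  - apply Der_orI1. eapply Der_andE1; hyp.
  - apply Der_orI2. eapply Der_andE1; hyp.
Qed.

Lemma Der_or_and_r n B d1 d2 s1 s2 : Der n B (Imp (Or (And d1 d2) (And s1 s2)) (Or d2 s2)).
Proof.
  apply Der_deduction. eapply Der_orE; [hyp| |].
  - apply Der_orI1. eapply Der_andE2; hyp.
  - apply Der_orI2. eapply Der_andE2; hyp.
Qed.

Definition NN_joins (G D S : fset) : fset :=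
  fun phi => G phi \/ exists d s, D d /\ S s /\ phi = NN (Or d s).

(* Finitely many hypotheses ~~(d_i \/ s_i) are implied by the single one
   ~~((/\ d_i) \/ (/\ s_i)). *)
Lemma Der_NN_joins_inv n G D S psi : Pc n G -> Pc n D -> Pc n S ->
  Der n (NN_joins G D S) psi -> exists d s, D d /\ S s /\ G (Imp (NN (Or d s)) psi).
Proof.
  intros PG PD PS Dr.
  assert (TD : D Top) by (apply (Pc_Der n); auto; apply Der_thm, ax_EFQ).
  assert (TS : S Top) by (apply (Pc_Der n); auto; apply Der_thm, ax_EFQ).
  induction Dr as [x [Hx|[d [s [Hd [Hs ->]]]]]|x Hx
                  |x y _ [d1 [s1 [Hd1 [Hs1 G1]]]] _ [d2 [s2 [Hd2 [Hs2 G2]]]]].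
  - exists Top, Top. repeat split; auto. apply (Pc_Der n); auto. apply Der_weaken, Der_hyp, Hx.
  - exists d, s. repeat split; auto. apply (Pc_Der n); auto. apply Der_imp_refl.
  - exists Top, Top. repeat split; auto. apply (Pc_Der n); auto. apply Der_weaken, Der_thm, Hx.
  - exists (And d1 d2), (And s1 s2).
    split; [|split]; apply (Pc_Der n); auto; try (apply Der_andI; apply Der_hyp; auto).
    apply Der_deduction.
    assert (E1 : Der n (add G (NN (Or (And d1 d2) (And s1 s2)))) (NN (Or d1 s1))).
    { eapply Der_mp; [apply Der_NN_mono, Der_or_and_l | hyp]. }
    assert (E2 : Der n (add G (NN (Or (And d1 d2) (And s1 s2)))) (NN (Or d2 s2))).
    { eapply Der_mp; [apply Der_NN_mono, Der_or_and_r | hyp]. }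
    eapply Der_mp; [eapply Der_mp; [apply Der_hyp; left; exact G1 | exact E1] |].
    eapply Der_mp; [apply Der_hyp; left; exact G2 | exact E2].
Qed.

Lemma Pc_kp_disj n G p l : Pc n G -> G (Imp (Neg p) (disj l)) ->
  G (Imp (Neg p) Bot) \/ exists f, In f l /\ G (Imp (Neg p) f).
Proof.
  intro PG; induction l as [|x l IH]; simpl; intro H; auto.
  assert (Hk : G (Or (Imp (Neg p) x) (Imp (Neg p) (disj l)))).
  { eapply Pc_mp; eauto. apply (Pc_Der n); auto. apply Der_thm, ax_kp. }
  destruct (Pc_prime n G PG _ _ Hk) as [h|h]; [right; exists x; auto|].
  destruct (IH h) as [h'|[f [Hf Hf']]]; auto. right; exists f; auto.
Qed.

Lemma End_NN_joins_cases n D S X : End_ n X ->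
  (forall d s, D d -> S s -> X (NN (Or d s))) -> incl D X \/ incl S X.
Proof.
  intros EX HX. apply NNPP; intro C. apply not_or_and in C as [CD CS].
  destruct (not_all_ex_not _ _ CD) as [d Hd]. apply imply_to_and in Hd as [Hd nd].
  destruct (not_all_ex_not _ _ CS) as [s Hs]. apply imply_to_and in Hs as [Hs ns].
  destruct (End_neg_or n X d EX) as [|Nd]; [contradiction|].
  destruct (End_neg_or n X s EX) as [|Ns]; [contradiction|].
  apply (Pc_Bot n X (proj1 EX)), (Pc_Der n); [apply (proj1 EX)|].
  apply (Der_mp _ _ (Neg (Or d s))); [apply Der_hyp, HX; auto|].
  apply Der_deduction. eapply Der_orE; [hyp | |].
  - apply (Der_mp _ _ d); [apply Der_hyp; left; left; exact Nd | hyp].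
  - apply (Der_mp _ _ s); [apply Der_hyp; left; left; exact Ns | hyp].
Qed.

(** * The theory below the two sets of ends *)

Section Uniformity.
Variables (n : nat) (G D S : fset).
Hypotheses (PG : Pc n G) (PD : Pc n D) (PS : Pc n S) (GD : incl G D) (GS : incl G S).

Definition end_DS (X : fset) : Prop := end_ n D X \/ end_ n S X.

Definition missed_by_end_DS : fset := fun f => exists X, end_DS X /\ ~ X f.

Lemma end_DS_Pc X : end_DS X -> Pc n X.
Proof. intros [[[PX _] _]|[[PX _] _]]; exact PX. Qed.

Lemma end_DS_NN_joins X : end_DS X -> incl (NN_joins G D S) X.
Proof.
  intros EX x Hx. pose proof (end_DS_Pc X EX) as PX.
  destruct EX as [[_ I]|[_ I]], Hx as [Hx|[d [s [Hd [Hs ->]]]]].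
  - apply I, GD, Hx.
  - apply (Pc_Der n X _ PX), Der_NN_intro, Der_orI1, Der_hyp, I, Hd.
  - apply I, GS, Hx.
  - apply (Pc_Der n X _ PX), Der_NN_intro, Der_orI2, Der_hyp, I, Hs.
Qed.

Lemma NN_joins_avoids : avoids n (NN_joins G D S) missed_by_end_DS.
Proof.
  intros l Hl Dr.
  destruct (Der_NN_joins_inv n G D S _ PG PD PS Dr) as [d [s [Hd [Hs Hg]]]].
  assert (HX : forall X phi, end_DS X -> G (Imp (NN (Or d s)) phi) -> X phi).
  { intros X phi EX Hphi. eapply Pc_mp; [exact (end_DS_Pc X EX) | |];
      apply (end_DS_NN_joins X EX); [left; exact Hphi | right; eauto]. }
  destruct (Pc_kp_disj n G (Neg (Or d s)) l PG Hg) as [h|[f [Hf Hf']]].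
  - destruct (end_exists n D PD) as [X0 E0].
    exact (Pc_Bot n X0 (end_DS_Pc X0 (or_introl E0)) (HX X0 Bot (or_introl E0) h)).
  - destruct (Hl f Hf) as [X [EX nX]]. exact (nX (HX X f EX Hf')).
Qed.

End Uniformity.

Theorem mainTheorem5 (n : nat) (Hn : 1 <= n) :
  forall G D S : fset,
    Pc n G -> Pc n D -> Pc n S -> incl G D -> incl G S ->
    exists T : fset,
      Pc n T /\ incl G T /\
      (forall X : fset, end_ n T X <-> (end_ n D X \/ end_ n S X)).
Proof.
  intros G D S PG PD PS GD GS.
  destruct (lindenbaum n _ _ (NN_joins_avoids n G D S PG PD PS GD GS))
    as [T [IT [CT [PrT AT]]]].
  assert (T_below : forall X, end_DS n D S X -> incl T X).
  { intros X EX f Hf. apply NNPP; intro nf.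
    exact (avoids_not_mem n T _ f AT Hf (ex_intro _ X (conj EX nf))). }
  destruct (end_exists n D PD) as [X0 E0].
  assert (PT : Pc n T).
  { apply Pc_intro; auto. intro DB.
    exact (Pc_Bot n X0 (end_DS_Pc n D S X0 (or_introl E0))
                  (T_below X0 (or_introl E0) Bot (CT _ DB))). }
  exists T. split; [exact PT | split; [intros x Hx; apply IT; left; exact Hx |]].
  intro X; split.
  - intros [EX IX].
    assert (HX : forall d s, D d -> S s -> X (NN (Or d s))).
    { intros d s Hd Hs. apply IX, IT. right; eauto. }
    destruct (End_NN_joins_cases n D S X EX HX) as [I|I]; [left | right]; split; assumption.
  - intro EX. split; [destruct EX as [[E _]|[E _]]; exact E | exact (T_below X EX)].
Qed.
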